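(* Let $X$ be a topological space, $\Lambda$ a real Hausdorff topological vector space, $Y$ a topological space and $y_0\in Y$. Let $\varphi\in\mathcal{G}$, $\Psi\in\mathcal{H}$ and $J\in\mathcal{M}$, and assume that $\varphi(\Psi(x,\cdot))$ is convex on $\Lambda$ for each $x\in X$. Let $\mu>\theta(\varphi,\Psi,J)$ and let $\mathcal{N}$ be a filtering cover of $X$ such that, for each $A\in\mathcal{N}$, the function $x\mapsto J(x)-\mu\varphi(\Psi(x,\lambda))$ is lower semicontinuous and inf-compact in $A$ for all $\lambda\in\mathrm{conv}(\{\lambda_x:x\in X\})$. Then there exist $A\in\mathcal{N}$ and $\lambda^*\in\mathrm{conv}(\{\lambda_x:x\in A\})$ such that the restriction to $A$ of the function $x\mapsto J(x)-\mu\varphi(\Psi(x,\lambda^* ))$ has at least two global minima.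
   Context: A family $\mathcal{N}$ of non-empty subsets of $X$ is a filtering cover of $X$ if $\bigcup_{A\in\mathcal{N}}A=X$ and for each $A_1,A_2\in\mathcal{N}$ there is $A_3\in\mathcal{N}$ with $A_1\cup A_2\subseteq A_3$. $\mathcal{G}$ is the family of all lower semicontinuous functions $\varphi:Y\to[0,+\infty[$ with $\varphi^{-1}(0)=\{y_0\}$ such that $\inf_{Y\setminus V}\varphi>0$ for each neighbourhood $V$ of $y_0$. $\mathcal{H}$ is the family of all functions $\Psi:X\times\Lambda\to Y$ such that, for each $x\in X$, $\Psi(x,\cdot)$ is continuous, injective, open, and takes the value $y_0$ at a point $\lambda_x$, and the function $x\mapsto\lambda_x$ is not constant. $\mathcal{M}$ is the family of all functions $J:X\to\mathbb{R}$ whose set $M_J$ of global minima is non-empty. For $\varphi\in\mathcal{G}$, $\Psi\in\mathcal{H}$, $J\in\mathcal{M}$, $$\theta(\varphi,\Psi,J)=\inf\left\{\frac{J(x)-J(u)}{\varphi(\Psi(x,\lambda_u))}:(u,x)\in M_J\times X,\ \lambda_x\neq\lambda_u\right\}.$$ A function on a topological space is inf-compact if all its sublevel sets $\{\psi\leq r\}$ are compact. *)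

From HB Require Import structures.
From mathcomp Require Import all_boot all_order all_algebra.
From mathcomp Require Import all_classical all_reals all_analysis.
Set Implicit Arguments. Unset Strict Implicit. Unset Printing Implicit Defensive.
Import Order.TTheory GRing.Theory Num.Theory.
Local Open Scope classical_set_scope.
Local Open Scope ring_scope.

Definition filtering_cover (X : Type) (N : set (set X)) : Prop :=
  [/\ (forall A, N A -> A !=set0),
      \bigcup_(A in N) A = setT &
      (forall A1 A2, N A1 -> N A2 -> exists2 A3, N A3 & A1 `|` A2 `<=` A3)].

Definition lsc_in (X : topologicalType) (R : realType) (A : set X)
    (f : X -> R) : Prop :=
  forall x, A x -> forall r, r < f x ->
    \forall y \near x, A y -> r < f y.

Definition inf_compact_in (X : topologicalType) (R : realType) (A : set X)
    (f : X -> R) : Prop :=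
  forall r : R, compact (A `&` [set x | f x <= r]).

Definition in_G (R : realType) (Y : topologicalType) (y0 : Y)
    (phi : Y -> R) : Prop :=
  [/\ lsc_in setT phi,
      (forall y, 0 <= phi y),
      (forall y, phi y = 0 <-> y = y0) &
      (forall V, nbhs y0 V ->
         exists2 d : R, 0 < d & forall y, ~ V y -> d <= phi y)].

(* The family H; lam x is the (unique) point lambda_x with Psi x lambda_x = y0. *)
Definition in_H (R : realType) (X : Type) (L : topologicalLmodType R)
    (Y : topologicalType) (y0 : Y) (Psi : X -> L -> Y) (lam : X -> L) : Prop :=
  [/\ (forall x, continuous (Psi x)),
      (forall x, injective (Psi x)),
      (forall x (U : set L), open U -> open (Psi x @` U)),
      (forall x, Psi x (lam x) = y0) &
      (exists x1 x2, lam x1 <> lam x2)].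

Definition argmins (R : realType) (X : Type) (J : X -> R) : set X :=
  [set u | forall x, J u <= J x].

Definition in_M (R : realType) (X : Type) (J : X -> R) : Prop :=
  argmins J !=set0.

Definition theta (R : realType) (X : Type) (L : topologicalLmodType R)
    (Y : topologicalType) (phi : Y -> R) (Psi : X -> L -> Y) (lam : X -> L)
    (J : X -> R) : R :=
  inf [set t : R | exists u x, [/\ argmins J u, lam x <> lam u &
                                   t = (J x - J u) / phi (Psi x (lam u))]].

Definition convex_fun (R : realType) (L : lmodType R) (f : L -> R) : Prop :=
  forall (a b : L) (t : R), 0 <= t <= 1 ->
    f ((1 - t) *: a + t *: b) <= (1 - t) * f a + t * f b.

Definition conv_hull (R : realType) (L : lmodType R) (S : set L) : set L :=
  [set v | exists (n : nat) (w : 'I_n -> R) (p : 'I_n -> L),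
     [/\ (forall i, 0 <= w i), \sum_(i < n) w i = 1, (forall i, S (p i)) &
         v = \sum_(i < n) w i *: p i]].

From HB Require Import structures.
From mathcomp Require Import all_boot all_order all_algebra.
From mathcomp Require Import all_classical all_reals all_analysis.
From mathcomp Require Import ring lra.
Import Order.TTheory GRing.Theory Num.Theory.
Import numFieldTopology.Exports numFieldNormedType.Exports.
Local Open Scope classical_set_scope.
Local Open Scope ring_scope.

(* Write f x l := J x - mu * phi (Psi x l), so that f x (lam x) = J x.
   Since theta < mu, some global minimum u of J and some x satisfy
   f x (lam u) < J u; lower semicontinuity of phi, continuity and openness of
   Psi and the uniform positivity of phi away from y0 then give a level
   r < J u such that f u l <= r or f x l <= r for every l.  Take A in N
   containing u and x.  As f y (lam y) = J y > r on A, compactness of the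
   sublevel set {f (., lam u) <= r} yields finitely many points x_i of A such
   that each y in A has f y (lam x_i) > r for some i.
   Over the simplex of convex combinations l of the lam x_i, the lower value
   m l := min_A f (., l) is upper semicontinuous and at most r, while every
   f y is concave in l.  At a maximiser l' of m, a minimiser x1 of f (., l')
   has f x1 (lam x_i) > r for some i.  Minimisers along the segment from l'
   towards lam x_i stay below m l' at lam x_i and, by concavity, almost
   minimise f (., l'); a cluster point of them is a second minimiser x2 with
   f x2 (lam x_i) <= m l' <= r, hence x2 <> x1. *)

Lemma compact_directed_cluster {T : topologicalType} {I : Type} {D : set I}
    {E : I -> set T} {K : set T} :
  compact K -> D !=set0 ->
  (forall i j, D i -> D j -> exists2 k, D k & E k `<=` E i `&` E j) ->
  (forall i, D i -> E i !=set0) -> (forall i, D i -> E i `<=` K) ->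
  exists2 c, K c & forall i, D i -> closure (E i) c.
Proof.
move=> cK [i0 Di0] dirE neE EK.
have FE : Filter (filter_from D E) by apply: filter_from_filter; [exists i0|].
have [|c [Kc clc]] := cK _ (filter_from_proper FE neE).
  by exists i0 => //; apply: EK.
by exists c => // i Di B cB; apply: clc => //; exists i.
Qed.

Lemma lsc_in_subset {X : topologicalType} {R : realType} {A B : set X}
    {g : X -> R} :
  B `<=` A -> lsc_in A g -> lsc_in B g.
Proof.
move=> BA gA x Bx r rgx; apply: filterS (gA x (BA x Bx) r rgx) => y gy By.
exact/gy/BA.
Qed.

Lemma lsc_in_closure_le {X : topologicalType} {R : realType} {A : set X}
    {g : X -> R} {r : R} {c : X} :
  lsc_in A g -> A c -> closure (A `&` [set y | g y <= r]) c -> g c <= r.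
Proof.
move=> gA Ac clc; rewrite leNgt; apply/negP => rgc.
have [y [[Ay gyr] gy]] := clc _ (gA c Ac r rgc).
by move: (gy Ay); rewrite ltNge gyr.
Qed.

Lemma lsc_in_comp {T U : topologicalType} {R : realType} {D : set T}
    {g : U -> R} {h : T -> U} :
  lsc_in setT g -> continuous h -> lsc_in D (g \o h).
Proof.
move=> gT hc w _ r rgw.
have /hc : nbhs (h w) [set z | r < g z] by apply: filterS (gT _ I r rgw) => z; apply.
move=> hw; have {}hw : nbhs w (h @^-1` [set z | r < g z]) := hw.
by apply: filterS hw => y /= ? _.
Qed.

Lemma lsc_in_scale_shift {X : topologicalType} {R : realType} {A : set X}
    {g : X -> R} (a b : R) :
  0 < a -> lsc_in A g -> lsc_in A (fun x => a * g x + b).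
Proof.
move=> a0 gA x Ax r rgx.
have /gA : (r - b) / a < g x by rewrite ltr_pdivrMr // mulrC ltrBlDr.
move=> /(_ Ax); apply: filterS => y rgy /rgy.
by rewrite ltr_pdivrMr // mulrC ltrBlDr.
Qed.

Lemma lsc_in_compact_min {X : topologicalType} {R : realType} {K : set X}
    {g : X -> R} :
  compact K -> K !=set0 -> lsc_in K g ->
  exists2 k, K k & forall y, K y -> g k <= g y.
Proof.
move=> cK K0 gK.
pose E k := K `&` [set y | g y <= g k].
have dirE i j : K i -> K j -> exists2 k, K k & E k `<=` E i `&` E j.
  have [gij|gji] := leP (g i) (g j) => Ki Kj.
    by exists i => // y [Ky gy]; split; split => //; apply: le_trans gij.
  by exists j => // y [Ky gy]; split; split => //; apply: le_trans (ltW gji).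
have [c Kc clc] := compact_directed_cluster cK K0 dirE
  (fun k Kk => ex_intro _ k (conj Kk (lexx _))) (fun k _ y => @proj1 _ _).
by exists c => // k Kk; apply: lsc_in_closure_le gK Kc (clc k Kk).
Qed.

Lemma lsc_in_inf_compact_min {X : topologicalType} {R : realType} {A : set X}
    {g : X -> R} :
  A !=set0 -> lsc_in A g -> inf_compact_in A g ->
  exists2 k, A k & forall y, A y -> g k <= g y.
Proof.
move=> [a Aa] gA gAc.
have gK : lsc_in (A `&` [set y | g y <= g a]) g.
  by apply: lsc_in_subset gA; apply: subIsetl.
have [|k [Ak gka] kmin] := lsc_in_compact_min (gAc (g a)) _ gK.
  by exists a; split => /=.
exists k => // y Ay; have [gya|/ltW gay] := leP (g y) (g a); first exact: kmin.
exact: le_trans gka gay.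
Qed.

Lemma exists_joint_sublevel {X : topologicalType} {R : realType} {A : set X}
    {g h : X -> R} {m : R} :
  lsc_in A g -> lsc_in A h -> inf_compact_in A g ->
  (forall e, 0 < e -> exists2 y, A y & g y <= m + e /\ h y <= m) ->
  exists2 c, A c & g c <= m /\ h c <= m.
Proof.
move=> gA hA gAc approx.
pose D := [set e : R | 0 < e <= 1].
pose E e := A `&` [set y | g y <= m + e /\ h y <= m].
have D1 : D 1 by rewrite /D /= ltr01 lexx.
have dirE e e' : D e -> D e' -> exists2 k, D k & E k `<=` E e `&` E e'.
  have [ee'|e'e] := leP e e' => De De'.
    by exists e => // y [Ay [gy hy]]; do !split => //; lra.
  by exists e' => // y [Ay [gy hy]]; do !split => //; lra.
have neE e : D e -> E e !=set0.
  by case/andP => /approx[y Ay gy _]; exists y.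
have EK e : D e -> E e `<=` A `&` [set y | g y <= m + 1].
  by case/andP => _ e1 y [Ay [gy _]]; split => //=; lra.
have [c [Ac _] clc] := compact_directed_cluster (gAc (m + 1)) (ex_intro _ 1 D1)
  dirE neE EK.
have clE e : D e -> closure (E e) `<=` closure (A `&` [set y | g y <= m + e]).
  by move=> _; apply: closure_subset => y [Ay []].
exists c => //; split.
  apply/ler_addgt0Pr => e e0; have De1 : D (Num.min e 1).
    by rewrite /D /= lt_min e0 ltr01 ge_min lexx orbT.
  apply: le_trans (lsc_in_closure_le gA Ac (clE _ De1 _ (clc _ De1))) _.
  by rewrite lerD2l ge_min lexx.
apply: lsc_in_closure_le hA Ac _; apply: closure_subset (clc _ D1).
by move=> y [Ay []].
Qed.

Lemma compact_lsc_finite_cover {X : topologicalType} {R : realType} {A : set X}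
    (h : X -> X -> R) (x0 : X) (r : R) :
  A x0 -> (forall x, A x -> r < h x x) -> (forall x, A x -> lsc_in A (h x)) ->
  compact (A `&` [set y | h x0 y <= r]) ->
  exists n (xs : 'I_n -> X), (forall i, A (xs i)) /\
    forall y, A y -> exists i, r < h (xs i) y.
Proof.
move=> Ax0 hdiag hlsc cK.
pose D := [set s : seq X | forall x, x \in s -> A x].
suff [s Ds covered] : exists2 s, D s &
    forall y, A y -> exists2 x, x \in s & r < h x y.
  exists (size s), (fun i => nth x0 s i); split=> [i|y /covered[x xs rh]].
    by apply/Ds/mem_nth.
  have ixs : (index x s < size s)%N by rewrite index_mem.
  by exists (Ordinal ixs); rewrite /= nth_index.
apply: contrapT => uncovered.
pose E s := A `&` [set y | forall x, x \in x0 :: s -> h x y <= r].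
have neE s : D s -> E s !=set0.
  move=> Ds; apply: contrapT => E0; apply: uncovered; exists (x0 :: s).
    by move=> x; rewrite in_cons => /predU1P[->|/Ds].
  move=> y Ay; apply: contrapT => ny; apply: E0; exists y; split => // x xs.
  by rewrite leNgt; apply/negP => rh; apply: ny; exists x.
have dirE s t : D s -> D t -> exists2 k, D k & E k `<=` E s `&` E t.
  move=> Ds Dt; exists (cat s t) => [/= x|y [Ay hy]].
    by rewrite mem_cat => /orP[/Ds|/Dt].
  by split; split => // x xs; apply: hy; move: xs;
    rewrite !in_cons mem_cat => /orP[->|->]; rewrite ?orbT.
have EK s : D s -> E s `<=` A `&` [set y | h x0 y <= r].
  by move=> _ y [Ay hy]; split => //; apply: hy; rewrite mem_head.
have D0 : D !=set0 by exists [::].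
have [c [Ac _] clc] := compact_directed_cluster cK D0 dirE neE EK.
have Dc : D [:: c] by move=> x; rewrite inE => /eqP->.
have : h c c <= r.
  apply: (lsc_in_closure_le (hlsc c Ac) Ac); apply: closure_subset (clc _ Dc).
  by move=> y [Ay hy]; split => //; apply: hy; rewrite !inE eqxx orbT.
by rewrite leNgt hdiag.
Qed.

Lemma inf_image_min {R : realType} {T : Type} {A : set T} {g : T -> R} {k : T} :
  A k -> (forall y, A y -> g k <= g y) -> inf (g @` A) = g k.
Proof.
move=> Ak kmin; have lbk : lbound (g @` A) (g k) by move=> _ [y Ay <-]; apply: kmin.
apply/le_anti/andP; split; last by apply: lb_le_inf lbk; exists (g k), k.
by apply: ge_inf; [exists (g k)|exists k].
Qed.

Lemma lsc_in_opp_inf {T : topologicalType} {R : realType} {I : Type}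
    {D : set T} {A : set I} {g : I -> T -> R} :
  (forall w, D w -> exists2 k, A k & forall y, A y -> g k w <= g y w) ->
  (forall y, A y -> lsc_in D (fun w => - g y w)) ->
  lsc_in D (fun w => - inf [set g y w | y in A]).
Proof.
move=> gmin glsc w Dw r; have [k Ak kmin] := gmin w Dw.
rewrite (inf_image_min Ak kmin) => rk.
apply: filterS (glsc k Ak w Dw r rk) => w' rk' Dw'.
have [k' Ak' k'min] := gmin w' Dw'; rewrite (inf_image_min Ak' k'min).
by apply: lt_le_trans (rk' Dw') _; rewrite lerN2 k'min.
Qed.

Lemma sub_conv_hull {R : realType} {L : lmodType R} (S : set L) :
  S `<=` conv_hull S.
Proof.
move=> p Sp; exists 1%N, (fun=> 1), (fun=> p).
by rewrite !big_ord1 scale1r.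
Qed.

Lemma conv_hull_mono {R : realType} {L : lmodType R} {S T : set L} :
  S `<=` T -> conv_hull S `<=` conv_hull T.
Proof.
by move=> ST v [n [w [p [w0 w1 Sp ->]]]]; exists n, w, p; split => // i; apply/ST.
Qed.

Section Simplex.
Context {R : realType} {n : nat}.

Definition simplex : set 'rV[R]_n :=
  [set w | (forall i, 0 <= w ord0 i) /\ \sum_(i < n) w ord0 i = 1].

Lemma simplex_compact : compact simplex.
Proof.
have coord_cont i : continuous (fun w : 'rV[R]_n => w ord0 i).
  exact: coord_continuous.
have sum_cont : continuous (fun w : 'rV[R]_n => \sum_(i < n) w ord0 i).
  move=> w; apply: (@cvg_big R^o _ +%R 0 xpredT (@add_continuous R^o)).
    exact: nbhs_filter.
  by move=> i _; apply: coord_cont.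
have simplexE : simplex = \bigcap_(i in [set: 'I_n])
    ((fun w : 'rV[R]_n => w ord0 i) @^-1` [set x | 0 <= x])
    `&` ((fun w : 'rV[R]_n => \sum_(i < n) w ord0 i) @^-1` [set 1]).
  apply/seteqP; split => w [w0 w1]; split => // i; first by move=> _; apply: w0.
  exact: w0 i I.
have cube_compact : compact [set w : 'rV[R]_n | forall i, `[(0:R), 1]%classic (w ord0 i)].
  exact: (@rV_compact R n (fun=> `[(0:R), 1]%classic) (fun=> @segment_compact R 0 1)).
apply: (subclosed_compact _ cube_compact).
- rewrite simplexE; apply: closedI.
    apply: closed_bigI => i _; apply: closed_comp => [x _|]; last exact: closed_ge.
    exact: coord_cont.
  by apply: closed_comp => [x _|]; [apply: sum_cont|apply: closed_eq].
- move=> w [w0 w1] i; rewrite /= in_itv /= w0 -w1 (bigD1 i) //= lerDl.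
  by apply: sumr_ge0 => j _; apply: w0.
Qed.

Lemma delta_simplex (i : 'I_n) : simplex (delta_mx 0 i).
Proof.
split=> [j|]; first by rewrite mxE ler0n.
rewrite (bigD1 i) //= big1 => [|j /negbTE ji]; rewrite mxE ?eqxx ?ji //.
by rewrite addr0.
Qed.

Lemma simplex_segment {w w' : 'rV[R]_n} {t : R} :
  simplex w -> simplex w' -> 0 <= t <= 1 ->
  simplex ((1 - t) *: w + t *: w').
Proof.
move=> [w0 w1] [w'0 w'1] /andP[t0 t1]; split=> [i|].
  by rewrite !mxE addr_ge0 ?mulr_ge0 ?subr_ge0.
under eq_bigr do rewrite !mxE.
by rewrite big_split /= -!mulr_sumr w1 w'1 !mulr1 subrK.
Qed.

Context {L : topologicalLmodType R} (q : 'I_n -> L).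

Definition simplex_comb (w : 'rV[R]_n) : L := \sum_(i < n) w ord0 i *: q i.

Lemma continuous_simplex_comb : continuous simplex_comb.
Proof.
move=> w; apply: (@cvg_big L _ +%R 0 xpredT (@add_continuous L)) => [|i _].
  exact: nbhs_filter.
apply: (@continuous_comp _ (R^o * L)%type _ (fun w : 'rV[R]_n => (w ord0 i : R^o, q i))
  (fun z => z.1 *: z.2)); last exact: scale_continuous.
apply: (@cvg_pair _ _ _ (nbhs w) (nbhs (w ord0 i : R^o)) (nbhs (q i)) _ _ _
  (fun w : 'rV[R]_n => (w ord0 i : R^o)) (fun=> q i)); last exact: cvg_cst.
exact: (@coord_continuous R 1 n ord0 i w).
Qed.

Lemma simplex_comb_delta (i : 'I_n) : simplex_comb (delta_mx 0 i) = q i.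
Proof.
rewrite /simplex_comb (bigD1 i) //= big1 => [|j /negbTE ji]; rewrite mxE ?eqxx.
  by rewrite scale1r addr0.
by rewrite ji scale0r.
Qed.

Lemma simplex_combD (a b : R) (w w' : 'rV[R]_n) :
  simplex_comb (a *: w + b *: w') = a *: simplex_comb w + b *: simplex_comb w'.
Proof.
rewrite /simplex_comb !scaler_sumr -big_split; apply: eq_bigr => i _.
by rewrite !mxE scalerDl !scalerA.
Qed.

Lemma simplex_comb_conv_hull {w : 'rV[R]_n} :
  simplex w -> conv_hull (range q) (simplex_comb w).
Proof. by move=> [w0 w1]; exists n, (fun i => w ord0 i), q; split => // i; exists i. Qed.

End Simplex.

Lemma weighted_le_split {R : realType} {a b m c e K : R} :
  0 < e -> 0 < K -> m - c <= K -> m <= a -> c <= b ->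
  (1 - e / (e + K)) * a + e / (e + K) * b <= m -> a <= m + e /\ b <= m.
Proof.
move=> e0 K0 mcK ma cb.
have eK0 : 0 < e + K by rewrite addr_gt0.
have -> : 1 - e / (e + K) = K / (e + K) by field; rewrite gt_eqF.
move=> h; have {}h : K * a + e * b <= (e + K) * m.
  have -> : K * a + e * b = (e + K) * (K / (e + K) * a + e / (e + K) * b).
    by field; rewrite gt_eqF.
  by rewrite ler_pM2l.
have b_le : b <= m by nra.
by split => //; nra.
Qed.

Section TwoMinima.
Context {R : realType} {X : topologicalType} {L : topologicalLmodType R}.
Context (A : set X) (f : X -> L -> R) {n : nat} (q : 'I_n -> L) (r : R).
Hypothesis A_neq0 : A !=set0.
Hypothesis f_lsc : forall l, conv_hull (range q) l -> lsc_in A (f^~ l).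
Hypothesis f_inf_compact :
  forall l, conv_hull (range q) l -> inf_compact_in A (f^~ l).
Hypothesis f_usc : forall y, A y -> lsc_in setT (fun l => - f y l).
Hypothesis f_concave : forall y, A y -> convex_fun (fun l => - f y l).
Hypothesis f_below : forall l, conv_hull (range q) l -> exists2 y, A y & f y l <= r.
Hypothesis f_above : forall y, A y -> exists i, r < f y (q i).

Let comb := simplex_comb q.
Let m l := inf [set f y l | y in A].

Lemma argmin_exists {l : L} : conv_hull (range q) l ->
  exists2 k, A k & forall y, A y -> f k l <= f y l.
Proof.
move=> Cl; have [y Ay _] := f_below _ Cl.
by apply: lsc_in_inf_compact_min; [exists y|apply: f_lsc|apply: f_inf_compact].
Qed.

Lemma lower_value_max :
  exists2 ws, simplex ws & forall w, simplex w -> m (comb w) <= m (comb ws).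
Proof.
have [i _] : exists i : 'I_n, True.
  by case: A_neq0 => y /(f_above y)[i _]; exists i.
have mlsc : lsc_in simplex (fun w => - m (comb w)).
  apply: (lsc_in_opp_inf (g := fun y w => f y (comb w))) => [w Sw|y Ay].
    exact/argmin_exists/simplex_comb_conv_hull.
  exact: (lsc_in_comp (g := fun l => - f y l) (f_usc _ Ay)
    (continuous_simplex_comb q)).
have [ws Sws ws_max] := lsc_in_compact_min simplex_compact
  (ex_intro _ _ (delta_simplex i)) mlsc.
by exists ws => // w /ws_max; rewrite lerN2.
Qed.

Lemma argmin_toward_vertex (i : 'I_n) {ws : 'rV[R]_n} :
  simplex ws -> (forall w, simplex w -> m (comb w) <= m (comb ws)) ->
  forall e, 0 < e -> exists2 y, A y &
    f y (comb ws) <= m (comb ws) + e /\ f y (q i) <= m (comb ws).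
Proof.
move=> Sws ws_max e e0; set ls := comb ws.
have Ccomb w : simplex w -> conv_hull (range q) (comb w).
  exact: simplex_comb_conv_hull.
have Cqi : conv_hull (range q) (q i) by apply: sub_conv_hull; exists i.
have [k Ak k_min] := argmin_exists (Ccomb _ Sws).
have [kq Akq kq_min] := argmin_exists Cqi.
pose K := `|m ls - f kq (q i)| + 1.
have mcK : m ls - f kq (q i) <= K.
  by rewrite /K; have := ler_norm (m ls - f kq (q i)); lra.
have K0 : 0 < K by rewrite /K; have := normr_ge0 (m ls - f kq (q i)); lra.
pose t := e / (e + K).
have t01 : 0 <= t <= 1.
  have eK0 : 0 < e + K by rewrite addr_gt0.
  by rewrite /t divr_ge0 ?(ltW e0) ?(ltW eK0) //= ler_pdivrMr // mul1r lerDl ltW.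
pose wt := (1 - t) *: ws + t *: delta_mx 0 i.
have Swt : simplex wt := simplex_segment Sws (delta_simplex i) t01.
have [y Ay y_min] := argmin_exists (Ccomb _ Swt).
have y_le : f y (comb wt) <= m ls by rewrite -(inf_image_min Ay y_min); apply: ws_max.
have y_concave := f_concave _ Ay ls (q i) t t01.
rewrite /= !mulrN -opprD lerN2 in y_concave.
exists y => //; apply: (weighted_le_split e0 K0 mcK _ (kq_min y Ay)).
  by rewrite /m (inf_image_min Ak k_min); apply: k_min.
apply: le_trans y_concave (le_trans _ y_le).
by rewrite /wt /comb simplex_combD simplex_comb_delta.
Qed.

Theorem two_minima : exists2 l, conv_hull (range q) l &
  exists x1 x2, [/\ x1 <> x2, A x1, A x2 &
    forall y, A y -> f x1 l <= f y l /\ f x2 l <= f y l].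
Proof.
have [ws Sws ws_max] := lower_value_max.
have Cls := simplex_comb_conv_hull q Sws.
have [x1 Ax1 x1_min] := argmin_exists Cls.
have mE : m (comb ws) = f x1 (comb ws) := inf_image_min Ax1 x1_min.
have [i ri] := f_above _ Ax1.
have Cqi : conv_hull (range q) (q i) by apply: sub_conv_hull; exists i.
have [x2 Ax2 [x2_min x2_i]] := exists_joint_sublevel (f_lsc _ Cls) (f_lsc _ Cqi)
  (f_inf_compact _ Cls) (argmin_toward_vertex i Sws ws_max).
have [y Ay yr] := f_below _ Cls.
have m_le_r : m (comb ws) <= r by rewrite mE; apply: le_trans (x1_min _ Ay) yr.
exists (comb ws) => //; exists x1, x2; split => //.
- by move=> x12; move: ri; rewrite x12 ltNge (le_trans x2_i m_le_r).
- move=> z Az; split; first exact: x1_min.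
  by apply: le_trans x2_min _; rewrite mE; apply: x1_min.
Qed.

End TwoMinima.

Lemma filtering_cover_pair {X : Type} {N : set (set X)} (x y : X) :
  filtering_cover N -> exists A, [/\ N A, A x & A y].
Proof.
case=> _ Ncov Ndir.
have [Ax NAx Axx] : (\bigcup_(A in N) A) x by rewrite Ncov.
have [Ay NAy Ayy] : (\bigcup_(A in N) A) y by rewrite Ncov.
have [A NA AxyA] := Ndir _ _ NAx NAy.
by exists A; split => //; apply: AxyA; [left|right].
Qed.

Section PerturbedFunctional.
Context {R : realType} {X : topologicalType} {L : topologicalLmodType R}.
Context {Y : topologicalType} {y0 : Y} {phi : Y -> R}.
Context {Psi : X -> L -> Y} {lam : X -> L} {J : X -> R}.
Hypothesis phiG : in_G y0 phi.
Hypothesis PsiH : in_H y0 Psi lam.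

Lemma phi_Psi_lam (x : X) : phi (Psi x (lam x)) = 0.
Proof.
by case: phiG PsiH => _ _ phi0 _ [_ _ _ Psi_lam _]; rewrite Psi_lam; apply/phi0.
Qed.

Lemma phi_Psi_gt0 {x : X} {l : L} : l <> lam x -> 0 < phi (Psi x l).
Proof.
case: phiG PsiH => _ phi_ge0 phi0 _ [_ Psi_inj _ Psi_lam _] l_neq.
rewrite lt_neqAle phi_ge0 andbT; apply/eqP => /esym/phi0.
by rewrite -(Psi_lam x) => /Psi_inj.
Qed.

Lemma lsc_in_opp_perturbed {mu : R} (x : X) : 0 < mu ->
  lsc_in setT (fun l => - (J x - mu * phi (Psi x l))).
Proof.
case: phiG PsiH => phi_lsc _ _ _ [Psi_cont _ _ _ _] mu0.
have -> : (fun l => - (J x - mu * phi (Psi x l))) = fun l => mu * phi (Psi x l) + - J x.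
  by apply/funext => l; rewrite opprB addrC.
exact: lsc_in_scale_shift mu (- J x) mu0 (lsc_in_comp phi_lsc (Psi_cont x)).
Qed.

Lemma convex_opp_perturbed {mu : R} (x : X) : 0 <= mu ->
  convex_fun (fun l => phi (Psi x l)) ->
  convex_fun (fun l => - (J x - mu * phi (Psi x l))).
Proof.
move=> mu0 cvx a b t t01; have /(ler_wpM2l mu0) h := cvx a b t t01.
have -> : (1 - t) * - (J x - mu * phi (Psi x a)) + t * - (J x - mu * phi (Psi x b))
  = mu * ((1 - t) * phi (Psi x a) + t * phi (Psi x b)) - J x by ring.
by rewrite opprB lerD2r.
Qed.

Let theta_set := [set t : R | exists u x, [/\ argmins J u, lam x <> lam u &
  t = (J x - J u) / phi (Psi x (lam u))]].

Lemma theta_set_neq0 : in_M J -> theta_set !=set0.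
Proof.
case: PsiH => _ _ _ _ [x1 [x2 lam12]] [u uM].
have [x lam_x] : exists x, lam x <> lam u.
  case: (pselect (lam x1 = lam u)) => [e1|]; last by exists x1.
  by exists x2; rewrite -e1 => /esym.
by exists ((J x - J u) / phi (Psi x (lam u))), u, x.
Qed.

Lemma theta_ge0 : in_M J -> 0 <= theta phi Psi lam J.
Proof.
move=> /theta_set_neq0 S0; apply: lb_le_inf S0 _ => _ [u [x [uM _ ->]]].
by rewrite divr_ge0 ?subr_ge0 ?uM //; case: phiG.
Qed.

Lemma theta_lt_witness {mu : R} : in_M J -> theta phi Psi lam J < mu ->
  exists u x, [/\ argmins J u, lam x <> lam u &
    J x - mu * phi (Psi x (lam u)) < J u].
Proof.
move=> /theta_set_neq0 S0 /(inf_lt S0)[_ [u [x [uM lam_x ->]]]].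
have P0 := phi_Psi_gt0 (fun e => lam_x (esym e)).
rewrite ltr_pdivrMr // => h; rewrite mulrC in h.
by exists u, x; split => //; lra.
Qed.

Lemma level_separation {mu : R} {u x : X} : 0 < mu ->
  J x - mu * phi (Psi x (lam u)) < J u ->
  exists2 r, r < J u & forall l,
    J u - mu * phi (Psi u l) <= r \/ J x - mu * phi (Psi x l) <= r.
Proof.
case: phiG PsiH => phi_lsc _ _ phi_away [Psi_cont Psi_inj Psi_open Psi_lam _] mu0 gap.
pose rho := (phi (Psi x (lam u)) + (J x - J u) / mu) / 2.
have gap' : (J x - J u) / mu < phi (Psi x (lam u)).
  by rewrite ltr_pdivrMr // mulrC ltrBlDr addrC -ltrBlDr.
have [rho_lt lt_rho] : rho < phi (Psi x (lam u)) /\ (J x - J u) / mu < rho.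
  by rewrite /rho; split; lra.
have : nbhs (lam u) [set l | rho < phi (Psi x l)].
  have := lsc_in_comp (D := setT) phi_lsc (Psi_cont x) (lam u) I rho rho_lt.
  by apply: filterS => l; apply.
rewrite nbhsE => -[U [oU Uu] U_sub].
have [d d0 d_le] : exists2 d, 0 < d & forall y, ~ (Psi u @` U) y -> d <= phi y.
  apply: phi_away; apply: open_nbhs_nbhs; split; first exact: Psi_open.
  by exists (lam u) => //; rewrite Psi_lam.
exists (Num.max (J x - mu * rho) (J u - mu * d)).
  have : J x - J u < rho * mu by rewrite -ltr_pdivrMr.
  have := mulr_gt0 mu0 d0.
  by rewrite gt_max [rho * _]mulrC => *; apply/andP; split; lra.
move=> l; have [Ul|Ul] := pselect (U l).
  right; rewrite le_max lerD2l lerN2 ler_pM2l // ltW //; exact: U_sub.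
left; rewrite le_max lerD2l lerN2 ler_pM2l // orbC d_le //.
by move=> [l' Ul' /Psi_inj l'l]; apply: Ul; rewrite -l'l.
Qed.

End PerturbedFunctional.

Theorem theorem3p3 (R : realType) (X : topologicalType)
    (L : topologicalLmodType R) (Y : topologicalType) (y0 : Y)
    (phi : Y -> R) (Psi : X -> L -> Y) (lam : X -> L) (J : X -> R)
    (mu : R) (N : set (set X)) :
  hausdorff_space L ->
  in_G y0 phi ->
  in_H y0 Psi lam ->
  in_M J ->
  (forall x, convex_fun (fun l : L => phi (Psi x l))) ->
  theta phi Psi lam J < mu ->
  filtering_cover N ->
  (forall A, N A -> forall l, conv_hull (lam @` setT) l ->
     lsc_in A (fun x => J x - mu * phi (Psi x l)) /\
     inf_compact_in A (fun x => J x - mu * phi (Psi x l))) ->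
  exists A, N A /\ exists2 l, conv_hull (lam @` A) l &
    exists x1 x2, [/\ x1 <> x2, A x1, A x2 &
      forall y, A y ->
        (J x1 - mu * phi (Psi x1 l) <= J y - mu * phi (Psi y l)) /\
        (J x2 - mu * phi (Psi x2 l) <= J y - mu * phi (Psi y l))].
Proof.
move=> _ phiG PsiH JM cvx theta_mu NN hyp.
have mu0 : 0 < mu := le_lt_trans (theta_ge0 phiG PsiH JM) theta_mu.
have [u [x [uM _ gap]]] := theta_lt_witness phiG PsiH JM theta_mu.
have [A [NA Au Ax]] := filtering_cover_pair u x NN.
have [r r_lt separated] := level_separation phiG PsiH mu0 gap.
pose f y l := J y - mu * phi (Psi y l).
have C_lam z : conv_hull (lam @` setT) (lam z) by apply: sub_conv_hull; exists z.
have f_diag z : A z -> r < f z (lam z).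
  move=> _; rewrite /f (phi_Psi_lam phiG PsiH) mulr0 subr0.
  exact: lt_le_trans r_lt (uM z).
have [n [xs [xsA covered]]] := compact_lsc_finite_cover (fun z y => f y (lam z))
  u r Au f_diag (fun z _ => (hyp A NA _ (C_lam z)).1) ((hyp A NA _ (C_lam u)).2 r).
have below l : exists2 y, A y & f y l <= r.
  by case: (separated l); [exists u|exists x].
have q_lam : range (lam \o xs) `<=` lam @` A.
  by move=> _ [i _ <-]; exists (xs i); first exact: xsA.
have C_sub := conv_hull_mono (subset_trans q_lam (image_subset lam (@subsetT _ A))).
have f_usc y : A y -> lsc_in setT (fun l => - f y l).
  by move=> _; exact: (lsc_in_opp_perturbed (J := J) phiG PsiH y mu0).
have f_concave y : A y -> convex_fun (fun l => - f y l).
  move=> _; exact: (convex_opp_perturbed (phi := phi) (Psi := Psi) (J := J) y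
    (ltW mu0) (cvx y)).
have [l Cl two] := two_minima A f (lam \o xs) r (ex_intro _ u Au)
  (fun l Cl => (hyp A NA l (C_sub l Cl)).1) (fun l Cl => (hyp A NA l (C_sub l Cl)).2)
  f_usc f_concave (fun l _ => below l) covered.
by exists A; split => //; exists l; first exact: (conv_hull_mono q_lam _ Cl).
Qed.
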